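(* Let $p\colon E\to B$ be a regular arc-covering with $E$ path-connected, let $e_0\in E$ and $b_0=p(e_0)$. Then there is a natural monomorphism $DTG(p)\to \pi(p,b_0)$ (sending a deck transformation $h$ to the class of $p\circ\alpha_h$, where $\alpha_h$ is any path in $E$ from $e_0$ to $h(e_0)$). This monomorphism is an isomorphism if $DTG(p)$ acts transitively on the fibers of $p$.
   Context: All maps are continuous. A map $p\colon E\to B$ is an arc-covering if for every $e_0\in E$, $t_0\in[0,1]$ and map $f\colon[0,1]\to B$ with $f(t_0)=p(e_0)$ there is a unique map $g\colon[0,1]\to E$ with $p\circ g=f$ and $g(t_0)=e_0$ (a lift). An arc-covering is regular if for every loop $\alpha$ in $B$ either all lifts of $\alpha$ are loops or none of them are. The monodromy group $\pi(p,b_0)$ is the set of equivalence classes of loops in $B$ at $b_0$, where $\alpha\sim\beta$ iff for any lifts $\tilde\alpha,\tilde\beta$ with $\tilde\alpha(0)=\tilde\beta(0)$ one has $\tilde\alpha(1)=\tilde\beta(1)$; the group operation is $[\alpha]\cdot[\beta]=[\alpha\ast\beta]$ (concatenation). The deck transformation group $DTG(p)$ is the group of homeomorphisms $h\colon E\to E$ with $p\circ h=p$. *)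

From HB Require Import structures.
From mathcomp Require Import all_boot all_order all_algebra.
From mathcomp Require Import all_classical all_reals topology set_interval.
From mathcomp Require Import Rstruct Rstruct_topology.
Set Implicit Arguments. Unset Strict Implicit. Unset Printing Implicit Defensive.
Import Order.TTheory GRing.Theory Num.Theory.
Local Open Scope classical_set_scope.
Local Open Scope ring_scope.

Notation I01 := (`[0%R, 1%R]%classic : set Rdefinitions.R).

(* a path in T: a map [0,1] -> T (represented as a map R -> T, only its
   values on [0,1] matter) that is continuous on [0,1] (subspace topology) *)
Definition is_path (T : topologicalType) (f : Rdefinitions.R -> T) : Prop :=
  {within I01, continuous f}.

Definition path_from_to (T : topologicalType) (f : Rdefinitions.R -> T) (x y : T) :=
  is_path f /\ f 0 = x /\ f 1 = y.

Definition loop_at (T : topologicalType) (f : Rdefinitions.R -> T) (x : T) :=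
  path_from_to f x x.

Definition path_connected_space (T : topologicalType) : Prop :=
  forall x y : T, exists f, path_from_to f x y.

Definition lift_of (E B : topologicalType) (p : E -> B)
  (f : Rdefinitions.R -> B) (g : Rdefinitions.R -> E) : Prop :=
  is_path g /\ forall t, I01 t -> p (g t) = f t.

Definition arc_covering (E B : topologicalType) (p : E -> B) : Prop :=
  continuous p /\
  forall (e0 : E) (t0 : Rdefinitions.R) (f : Rdefinitions.R -> B),
    I01 t0 -> is_path f -> f t0 = p e0 ->
    (exists g, lift_of p f g /\ g t0 = e0) /\
    (forall g1 g2, lift_of p f g1 -> g1 t0 = e0 ->
                   lift_of p f g2 -> g2 t0 = e0 ->
                   forall t, I01 t -> g1 t = g2 t).

Definition regular_arc_covering (E B : topologicalType) (p : E -> B) : Prop :=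
  arc_covering p /\
  forall (b : B) (a : Rdefinitions.R -> B), loop_at a b ->
    (forall g, lift_of p a g -> g 0 = g 1) \/
    (forall g, lift_of p a g -> g 0 <> g 1).

(* the equivalence relation defining the monodromy group pi(p, b0) *)
Definition mono_equiv (E B : topologicalType) (p : E -> B)
  (a b : Rdefinitions.R -> B) : Prop :=
  forall ga gb, lift_of p a ga -> lift_of p b gb -> ga 0 = gb 0 -> ga 1 = gb 1.

Definition concat_path (T : Type) (a b : Rdefinitions.R -> T) : Rdefinitions.R -> T :=
  fun t => if t <= 1 / 2 then a (2 * t) else b (2 * t - 1).

Definition deck_transformation (E B : topologicalType) (p : E -> B) (h : E -> E) : Prop :=
  continuous h /\ (exists k : E -> E, continuous k /\ cancel h k /\ cancel k h) /\
  (forall e, p (h e) = p e).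

(** Everything rests on one consequence of regularity: two paths alpha, beta
    in B having lifts with common initial and common final points are
    monodromy-equivalent, because the loop alpha * beta^-1 then has a closed
    lift, so all its lifts are closed.  Well-definedness, the homomorphism
    property and surjectivity (under transitivity on fibres) are instances of this; for
    injectivity, equivalent classes force h e0 = k e0, and two deck
    transformations agreeing at one point agree everywhere since E is path
    connected and lifts are unique. *)
From HB Require Import structures.
From mathcomp Require Import all_boot all_order all_algebra.
From mathcomp Require Import all_classical all_reals topology normedtype.
From mathcomp Require Import Rstruct Rstruct_topology.
From mathcomp Require Import lra.
Set Implicit Arguments. Unset Strict Implicit. Unset Printing Implicit Defensive.
Import Order.TTheory GRing.Theory Num.Theory.
Local Open Scope classical_set_scope.
Local Open Scope ring_scope.

Notation R := Rdefinitions.R.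

Lemma I01P (t : R) : I01 t <-> 0 <= t /\ t <= 1.
Proof. by rewrite /= in_itv /=; split=> /andP. Qed.

Lemma I01_0 : I01 (0 : R). Proof. by apply/I01P; split; lra. Qed.
Lemma I01_1 : I01 (1 : R). Proof. by apply/I01P; split; lra. Qed.

Lemma affine_continuous (a b : R) : continuous (fun t : R => a * t + b).
Proof.
move=> x; apply: (@continuousD _ R^o); first exact: mulrl_continuous.
exact: cst_continuous.
Qed.

Definition rev_path (T : Type) (a : R -> T) : R -> T := fun t => a (1 - t).

Section Paths.
Variable T : topologicalType.

Lemma is_path_comp (U : topologicalType) (g : R -> T) (h : T -> U) :
  is_path g -> continuous h -> is_path (h \o g).
Proof. by move=> pg ch t; apply: continuous_comp (pg t) (ch (g t)). Qed.

Lemma affine_reparam_continuous (A : set R) (g : R -> T) (a b : R) :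
  (forall t, A t -> I01 (a * t + b)) -> is_path g ->
  {within A, continuous (fun t => g (a * t + b))}.
Proof.
move=> aI pg.
have := @subspaceT_continuous _ _ A I01 (mkfun_fun aI)
  (continuous_subspaceT (@affine_continuous a b)).
by move=> ca t; exact: (continuous_comp (ca t) (pg _)).
Qed.

Lemma is_path_rev (a : R -> T) : is_path a -> is_path (rev_path a).
Proof.
have -> : rev_path a = fun t => a (-1 * t + 1).
  by apply: funext => t; rewrite /rev_path; congr a; lra.
by apply: affine_reparam_continuous => t /I01P[? ?]; apply/I01P; split; lra.
Qed.

Lemma is_path_concat (a b : R -> T) :
  is_path a -> is_path b -> a 1 = b 0 -> is_path (concat_path a b).
Proof.
move=> pa pb ab; rewrite /is_path.
have -> : I01 = `[0, 1/2] `|` `[1/2, 1].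
  apply/seteqP; split=> t /=; rewrite !in_itv /=.
    by move=> /andP[? ?]; case: (lerP t (1/2)) => ?; [left | right]; lra.
  by case=> /andP[? ?]; lra.
apply: withinU_continuous; [exact: interval_closed | exact: interval_closed | |].
- have aI : forall t, `[0, 1/2]%classic t -> I01 (2 * t + 0).
    by move=> t /=; rewrite in_itv /= => /andP[? ?]; apply/I01P; split; lra.
  apply: (subspace_eq_continuous _ (affine_reparam_continuous aI pa)).
  move=> t /set_mem /=; rewrite in_itv /= => /andP[? ?].
  by rewrite /from_subspace /concat_path /= addr0 ifT.
- have bI : forall t, `[1/2, 1]%classic t -> I01 (2 * t + -1).
    by move=> t /=; rewrite in_itv /= => /andP[? ?]; apply/I01P; split; lra.
  apply: (subspace_eq_continuous _ (affine_reparam_continuous bI pb)).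
  move=> t /set_mem /=; rewrite in_itv /= => /andP[? ?].
  rewrite /from_subspace /concat_path /=.
  case: ifP => ? //; have -> : 2 * t = 1 by lra.
  by rewrite subrr ab.
Qed.

End Paths.

Lemma concat_path0 (T : Type) (a b : R -> T) : concat_path a b 0 = a 0.
Proof. by rewrite /concat_path ifT ?mulr0 //; lra. Qed.

Lemma concat_path1 (T : Type) (a b : R -> T) : concat_path a b 1 = b 1.
Proof.
rewrite /concat_path ifF; last by apply/negbTE; rewrite -ltNge; lra.
by congr b; lra.
Qed.

Section Lifts.
Variables (E B : topologicalType) (p : E -> B).

Lemma lift_of_path (a : R -> E) : is_path a -> lift_of p (p \o a) a.
Proof. by []. Qed.

Lemma lift_of_eq (f f' : R -> B) (g : R -> E) :
  (forall t, I01 t -> f t = f' t) -> lift_of p f g -> lift_of p f' g.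
Proof. by move=> ff' [pg pgf]; split=> // t It; rewrite -ff' ?pgf. Qed.

Lemma lift_of_deck (h : E -> E) (a : R -> E) :
  deck_transformation p h -> is_path a -> lift_of p (p \o a) (h \o a).
Proof.
by move=> [ch [_ ph]] pa; split=> [|t _ /=]; [exact: is_path_comp | rewrite ph].
Qed.

Lemma lift_of_rev (f : R -> B) (g : R -> E) :
  lift_of p f g -> lift_of p (rev_path f) (rev_path g).
Proof.
move=> [pg pgf]; split=> [|t /I01P[? ?]]; first exact: is_path_rev.
by apply: pgf; apply/I01P; split; lra.
Qed.

Lemma lift_of_concat (fa fb : R -> B) (ga gb : R -> E) :
  lift_of p fa ga -> lift_of p fb gb -> ga 1 = gb 0 ->
  lift_of p (concat_path fa fb) (concat_path ga gb).
Proof.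
move=> [pa pfa] [pb pfb] gab; split; first exact: is_path_concat.
move=> t /I01P[? ?]; rewrite /concat_path; case: ifP => ?.
  by apply: pfa; apply/I01P; split; lra.
have ? : 1/2 < t by rewrite ltNge; apply/negbT.
by apply: pfb; apply/I01P; split; lra.
Qed.

Lemma lift_of_concat_l (fa fb : R -> B) (g : R -> E) :
  lift_of p (concat_path fa fb) g -> lift_of p fa (fun t => g (1/2 * t + 0)).
Proof.
have hI : forall t, I01 t -> I01 (1/2 * t + 0).
  by move=> t /I01P[? ?]; apply/I01P; split; lra.
move=> [pg pgf]; split=> [|t It]; first exact: affine_reparam_continuous.
rewrite pgf; last exact: hI.
move/I01P: It => [? ?]; rewrite /concat_path ifT; [by congr fa; lra | lra].
Qed.

Lemma lift_of_concat_r (fa fb : R -> B) (g : R -> E) : fa 1 = fb 0 ->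
  lift_of p (concat_path fa fb) g -> lift_of p fb (fun t => g (1/2 * t + 1/2)).
Proof.
have hI : forall t, I01 t -> I01 (1/2 * t + 1/2).
  by move=> t /I01P[? ?]; apply/I01P; split; lra.
move=> fab [pg pgf]; split=> [|t It]; first exact: affine_reparam_continuous.
rewrite pgf; last exact: hI.
move/I01P: It => [? ?]; rewrite /concat_path; case: ifP => ?.
  have -> : t = 0 by lra.
  by rewrite -fab; congr fa; lra.
by congr fb; lra.
Qed.

Hypothesis ac : arc_covering p.

Lemma lift_exists (f : R -> B) (e : E) (t0 : R) :
  I01 t0 -> is_path f -> f t0 = p e -> exists g, lift_of p f g /\ g t0 = e.
Proof. by move=> It0 pf fe; case: (ac.2 e t0 f It0 pf fe). Qed.

Lemma lift_unique (f : R -> B) (g1 g2 : R -> E) (t0 : R) :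
  I01 t0 -> is_path f -> lift_of p f g1 -> lift_of p f g2 -> g1 t0 = g2 t0 ->
  forall t, I01 t -> g1 t = g2 t.
Proof.
move=> It0 pf l1 l2 e12.
have [_ uniq] := ac.2 (g1 t0) t0 f It0 pf (esym (l1.2 t0 It0)).
exact: uniq.
Qed.

Lemma deck_transformation_eq (h k : E -> E) (e0 : E) :
  path_connected_space E ->
  deck_transformation p h -> deck_transformation p k -> h e0 = k e0 -> h = k.
Proof.
move=> pcE dh dk hk0; apply: funext => e.
have [a [pa [a0 a1]]] := pcE e0 e.
rewrite -a1; apply: (lift_unique I01_0 (is_path_comp pa ac.1)
  (lift_of_deck dh pa) (lift_of_deck dk pa)); last exact: I01_1.
by rewrite /= a0.
Qed.

Lemma deck_eq_of_mono_equiv (h k : E -> E) (e0 : E) (a b : R -> E) :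
  path_connected_space E ->
  deck_transformation p h -> deck_transformation p k ->
  path_from_to a e0 (h e0) -> path_from_to b e0 (k e0) ->
  mono_equiv p (p \o a) (p \o b) -> h = k.
Proof.
move=> pcE dh dk [pa [a0 a1]] [pb [b0 b1]] ab.
apply: (deck_transformation_eq (e0 := e0) pcE dh dk).
rewrite -a1 -b1; apply: (ab a b (lift_of_path pa) (lift_of_path pb)).
by rewrite a0 b0.
Qed.

End Lifts.

Section RegularCovering.
Variables (E B : topologicalType) (p : E -> B).
Hypothesis rac : regular_arc_covering p.

Lemma regular_lift_closed (f : R -> B) (b : B) (g g' : R -> E) :
  loop_at f b -> lift_of p f g -> g 0 = g 1 -> lift_of p f g' -> g' 0 = g' 1.
Proof.
move=> lf lg g01 lg'.
by case: (rac.2 b f lf) => [closed | open]; [exact: closed | case: (open g)].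
Qed.

Lemma mono_equiv_of_lifts (fa fb : R -> B) (ga gb : R -> E) :
  is_path fa -> is_path fb -> lift_of p fa ga -> lift_of p fb gb ->
  ga 0 = gb 0 -> ga 1 = gb 1 -> mono_equiv p fa fb.
Proof.
move=> pfa pfb la lb gab0 gab1 u v lu lv uv0.
have ac := rac.1.
have fab0 : fa 0 = fb 0 by rewrite -(la.2 0 I01_0) -(lb.2 0 I01_0) gab0.
have fab1 : fa 1 = rev_path fb 0.
  by rewrite /rev_path subr0 -(la.2 1 I01_1) -(lb.2 1 I01_1) gab1.
pose f := concat_path fa (rev_path fb).
have pf : is_path f by apply: is_path_concat => //; exact: is_path_rev.
have lf : loop_at f (fa 0).
  by split=> //; rewrite /f concat_path0 concat_path1 /rev_path subrr fab0.
have lg0 : lift_of p f (concat_path ga (rev_path gb)).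
  by apply: (lift_of_concat la (lift_of_rev lb)); rewrite /rev_path subr0.
have g0cl : concat_path ga (rev_path gb) 0 = concat_path ga (rev_path gb) 1.
  by rewrite concat_path0 concat_path1 /rev_path subrr.
have fu0 : f 0 = p (u 0) by rewrite (lu.2 0 I01_0) /f concat_path0.
have [g [lg gu]] := lift_exists ac I01_0 pf fu0.
have gcl := regular_lift_closed lf lg0 g0cl lg.
have lgl := lift_of_concat_l lg.
have lgr : lift_of p fb (rev_path (fun t => g (1/2 * t + 1/2))).
  apply: lift_of_eq (lift_of_rev (lift_of_concat_r fab1 lg)).
  by move=> t _; rewrite /rev_path; congr fb; lra.
have -> : u 1 = g (1/2 * 1 + 0).
  apply: (lift_unique ac I01_0 pfa lu lgl _ I01_1).
  by rewrite mulr0 addr0 gu.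
have -> : v 1 = rev_path (fun t => g (1/2 * t + 1/2)) 1.
  apply: (lift_unique ac I01_0 pfb lv lgr _ I01_1).
  rewrite /rev_path -uv0 -gu gcl; congr g; lra.
by rewrite /rev_path; congr g; lra.
Qed.

Lemma mono_equiv_proj_path (e0 e1 : E) (a a' : R -> E) :
  path_from_to a e0 e1 -> path_from_to a' e0 e1 ->
  mono_equiv p (p \o a) (p \o a').
Proof.
move=> [pa [a0 a1]] [pa' [a0' a1']]; have cp := rac.1.1.
apply: (mono_equiv_of_lifts (is_path_comp pa cp) (is_path_comp pa' cp)
  (lift_of_path p pa) (lift_of_path p pa')); congruence.
Qed.

Lemma mono_equiv_deck_path_comp (h k : E -> E) (e0 : E) (a b c : R -> E) :
  deck_transformation p h ->
  path_from_to a e0 (h e0) -> path_from_to b e0 (k e0) ->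
  path_from_to c e0 (h (k e0)) ->
  mono_equiv p (p \o c) (concat_path (p \o a) (p \o b)).
Proof.
move=> dh [pa [a0 a1]] [pb [b0 b1]] [pc [c0 c1]]; have cp := rac.1.1.
have hb0 : a 1 = (h \o b) 0 by rewrite /= b0.
have lab := lift_of_concat (lift_of_path p pa) (lift_of_deck dh pb) hb0.
apply: (mono_equiv_of_lifts (is_path_comp pc cp) _ (lift_of_path p pc) lab).
- apply: is_path_concat; [exact: is_path_comp | exact: is_path_comp |].
  by rewrite /= a1 b0; case: dh => [_ [_ ->]].
- by rewrite concat_path0 c0.
- by rewrite concat_path1 c1 /= b1.
Qed.

(* The witness is a deck transformation carrying e0 to the endpoint of the
   lift of alpha from e0, and that lift is the path a. *)
Lemma deck_path_of_loop (e0 : E) (alpha : R -> B) :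
  (forall e e' : E, p e = p e' -> exists h, deck_transformation p h /\ h e = e') ->
  loop_at alpha (p e0) ->
  exists h a, deck_transformation p h /\ path_from_to a e0 (h e0) /\
    mono_equiv p alpha (p \o a).
Proof.
move=> transitive [palpha [alpha0 alpha1]].
have [g [lg g0]] := lift_exists rac.1 I01_0 palpha alpha0.
have pg1 : p e0 = p (g 1) by rewrite lg.2 ?alpha1 //; exact: I01_1.
have [h [dh he0]] := transitive _ _ pg1.
exists h, g; split=> //; split; first by split; [exact: lg.1 | rewrite g0 he0].
exact: (mono_equiv_of_lifts palpha (is_path_comp lg.1 rac.1.1) lg
  (lift_of_path p lg.1) erefl erefl).
Qed.

End RegularCovering.

Theorem proposition2p10 (E B : topologicalType) (p : E -> B) (e0 : E) :
  regular_arc_covering p -> path_connected_space E ->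
  (forall h, deck_transformation p h -> exists a, path_from_to a e0 (h e0)) /\
  (forall h a a', deck_transformation p h ->
     path_from_to a e0 (h e0) -> path_from_to a' e0 (h e0) ->
     mono_equiv p (p \o a) (p \o a')) /\
  (forall h k a b c, deck_transformation p h -> deck_transformation p k ->
     path_from_to a e0 (h e0) -> path_from_to b e0 (k e0) ->
     path_from_to c e0 (h (k e0)) ->
     mono_equiv p (p \o c) (concat_path (p \o a) (p \o b))) /\
  (forall h k a b, deck_transformation p h -> deck_transformation p k ->
     path_from_to a e0 (h e0) -> path_from_to b e0 (k e0) ->
     mono_equiv p (p \o a) (p \o b) -> h = k) /\
  ((forall e e' : E, p e = p e' -> exists h, deck_transformation p h /\ h e = e') ->
   forall alpha, loop_at alpha (p e0) ->
   exists h a, deck_transformation p h /\ path_from_to a e0 (h e0) /\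
     mono_equiv p alpha (p \o a)).
Proof.
move=> rac pcE; split; first by move=> h _; exact: pcE.
split; first by move=> h a a' _; exact: mono_equiv_proj_path.
split; first by move=> h k a b c dh _; exact: mono_equiv_deck_path_comp.
split; first by move=> h k a b; apply: (deck_eq_of_mono_equiv rac.1 pcE).
by move=> transitive alpha; exact: deck_path_of_loop.
Qed.
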